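(* Let $n\ge 3$. Any generating set of the semigroup $\mathbf{W}^{\le 5}_{\mathrm{bf}}(n)$ has at least $(n-2)!$ elements.
   Context: Let $Q=\{0,\dots,n-1\}$ and $Q_M=\{1,\dots,n-3\}$. Transformations of $Q$ act on the right, $q(st)=(qs)t$. Let $\mathbf{B}_{\mathrm{bf}}(n)$ be the set of all transformations $t$ of $Q$ with $0\notin Qt$, $(n-1)t=n-1$, $(n-2)t=n-1$, and for all $j\ge1$, either $0t^j=n-1$ or $0t^j\ne qt^j$ for all $0<q<n-1$. Then $\mathbf{W}^{\le 5}_{\mathrm{bf}}(n)=\{t\in\mathbf{B}_{\mathrm{bf}}(n)\mid$ for all distinct $p,q\in Q_M$, $pt=qt=n-1$ or $pt\ne qt\}$, a semigroup under composition. *)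

From mathcomp Require Import all_boot.
Set Implicit Arguments. Unset Strict Implicit. Unset Printing Implicit Defensive.

Definition trans (n : nat) := {ffun 'I_n -> 'I_n}.

(* Right action: q (s t) = (q s) t, i.e. apply s first, then t. *)
Definition tmul (n : nat) (s t : trans n) : trans n := [ffun q => t (s q)].

Definition tpow_app (n : nat) (t : trans n) (j : nat) (q : 'I_n) : 'I_n :=
  iter j t q.

Definition in_Bbf (n : nat) (t : trans n) : Prop :=
  (forall q : 'I_n, val (t q) <> 0) /\
  (forall q : 'I_n, val q = n.-1 -> val (t q) = n.-1) /\
  (forall q : 'I_n, val q = n.-2 -> val (t q) = n.-1) /\
  (forall (j : nat) (p : 'I_n), 1 <= j -> val p = 0 ->
     val (tpow_app t j p) = n.-1 \/
     (forall q : 'I_n, 0 < val q < n.-1 -> tpow_app t j p <> tpow_app t j q)).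

Definition in_QM (n : nat) (q : 'I_n) : bool := (1 <= val q) && (val q <= n - 3).

Definition in_W5bf (n : nat) (t : trans n) : Prop :=
  in_Bbf t /\
  (forall p q : 'I_n, in_QM p -> in_QM q -> p <> q ->
     (val (t p) = n.-1 /\ val (t q) = n.-1) \/ t p <> t q).

(* Product g1 g2 ... gk of a nonempty list (g1 acts first). *)
Definition tprod (n : nat) (g : trans n) (s : seq (trans n)) : trans n :=
  foldl (@tmul n) g s.

Definition generates_W5bf (n : nat) (G : {set trans n}) : Prop :=
  (forall g, g \in G -> in_W5bf g) /\
  (forall t : trans n, in_W5bf t ->
     exists (g : trans n) (s : seq (trans n)),
       g \in G /\ all (fun x => x \in G) s /\ t = tprod g s).

From mathcomp Require Import all_boot all_fingroup.
From mathcomp Require Import zify.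
Set Implicit Arguments. Unset Strict Implicit. Unset Printing Implicit Defensive.

(* Write n = k + 3.  Every permutation p of {0,...,k} = {0,...,n-3} gives the
   element q |-> p q + 1 (for q <= n-3), n-2, n-1 |-> n-1 of W.  It maps
   {0,...,n-3} injectively below n-1, and no product P x with x in W can do
   so: P avoids 0, and x sends n-2 and n-1 to n-1, so P would have to inject
   the n-2 points {0,...,n-3} into the n-3 points {1,...,n-3}.  Hence all
   these (n-2)! distinct elements are indecomposable and lie in every
   generating set. *)

Lemma tprod_rcons n (g x : trans n) s :
  tprod g (rcons s x) = tmul (tprod g s) x.
Proof. by rewrite /tprod foldl_rcons. Qed.

Lemma tprod_neq0 n (g : trans n) s :
  (forall h, h \in g :: s -> forall q, val (h q) <> 0) ->
  forall q, val (tprod g s q) <> 0.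
Proof.
elim/last_ind: s => [|s x IH] hG q; first by apply: hG; rewrite mem_head.
rewrite tprod_rcons ffunE; apply: hG.
by rewrite -cats1 -cat_cons mem_cat mem_seq1 eqxx orbT.
Qed.

Section PermutationEmbedding.
Variable k : nat.

Lemma low_le : k.+1 <= k.+3. Proof. exact: ltnW (leqnSn _). Qed.

Local Notation low := (widen_ord low_le).

Lemma not_Bbf_right_factor (P x : trans k.+3) :
  in_Bbf x -> (forall q, val (P q) <> 0) ->
  (forall i : 'I_k.+1, val (tmul P x (low i)) < k.+2) ->
  injective (tmul P x \o low) -> False.
Proof.
case=> _ [x_last [x_penult _]] P_neq0 below_last inj.
have P_low (i : 'I_k.+1) : 0 < val (P (low i)) <= k.
  have := below_last i; rewrite ffunE => lt_x.
  have neq0 := P_neq0 (low i); have lt_n := ltn_ord (P (low i)).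
  rewrite /= in lt_x neq0 *.
  case: (ltnP (P (low i)) k.+1) => [|ge_k1]; first lia.
  have [e|e] : val (P (low i)) = k.+2 \/ val (P (low i)) = k.+1 by rewrite /=; lia.
  - by rewrite x_last in lt_x; lia.
  - by rewrite x_penult in lt_x; lia.
have lt_k (i : 'I_k.+1) : (val (P (low i))).-1 < k by have := P_low i; lia.
pose f (i : 'I_k.+1) : 'I_k := Ordinal (lt_k i).
have f_inj : injective f.
  move=> i j /(congr1 val) /= e; apply: inj => /=.
  have /val_inj eP : val (P (low i)) = val (P (low j)).
    by have := P_low i; have := P_low j; rewrite /=; lia.
  by rewrite !ffunE eP.
by have := leq_card f f_inj; rewrite !card_ord ltnn.
Qed.

Definition perm_trans (p : {perm 'I_k.+1}) : trans k.+3 :=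
  [ffun q : 'I_k.+3 => if val q < k.+1 then inord (p (inord q)).+1
                       else inord k.+2].

Lemma perm_transE p (q : 'I_k.+3) :
  val (perm_trans p q) = if val q < k.+1 then (p (inord q)).+1 else k.+2.
Proof.
rewrite ffunE; case: ifP => _ /=; rewrite inordK //.
by have := ltn_ord (p (inord q)); lia.
Qed.

Lemma perm_trans_low p (i : 'I_k.+1) : val (perm_trans p (low i)) = (p i).+1.
Proof.
rewrite perm_transE /= ltn_ord; congr (val (p _)).+1.
by apply: val_inj; rewrite /= inordK.
Qed.

Lemma perm_trans_low_inj p : injective (perm_trans p \o low).
Proof.
move=> i j /(congr1 val) /=; rewrite !perm_trans_low => -[e].
by apply: (perm_inj (s := p)); apply: val_inj.
Qed.

Lemma perm_trans_eq p x y :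
  perm_trans p x = perm_trans p y -> x = y \/ val (perm_trans p x) = k.+2.
Proof.
move/(congr1 val); rewrite !perm_transE.
case: ifP => hx; case: ifP => hy; [move=> [e]| | |by right].
- left; apply: val_inj.
  have /perm_inj/(congr1 val) : p (inord x) = p (inord y) by apply: val_inj.
  by rewrite /= !inordK.
- by have := ltn_ord (p (inord x)); lia.
- by have := ltn_ord (p (inord y)); lia.
Qed.

Lemma iter_perm_trans_eq p j x y :
  iter j (perm_trans p) x = iter j (perm_trans p) y ->
  x = y \/ val (iter j (perm_trans p) x) = k.+2.
Proof.
elim: j => [|j IH] /= e; first by left.
case: (perm_trans_eq e) => [/IH [->|e_last]|->]; [by left| |by right].
by right; rewrite perm_transE e_last; case: ifP => //; lia.
Qed.

Lemma perm_trans_W5bf p : in_W5bf (perm_trans p).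
Proof.
split; [split; [|split; [|split]]|].
- by move=> q; rewrite perm_transE; case: ifP.
- by move=> q /= q_last; rewrite perm_transE /= q_last; case: ifP => //; lia.
- by move=> q /= q_last; rewrite perm_transE /= q_last; case: ifP => //; lia.
- move=> j q0 _ q0_0.
  have [e|ne] := eqVneq (val (tpow_app (perm_trans p) j q0)) k.+2; first by left.
  right=> q q_mid /iter_perm_trans_eq [e|e]; last by rewrite e eqxx in ne.
  by move: q_mid; rewrite -e q0_0.
- move=> a b /andP [_ a_le] _ ne; right => /perm_trans_eq [//|].
  by rewrite perm_transE; case: ifP => a_lt; [have := ltn_ord (p (inord a))|]; lia.
Qed.

Lemma perm_trans_inj : injective perm_trans.
Proof.
move=> p1 p2 e; apply/permP => i; apply: val_inj.
by have := perm_trans_low p1 i; rewrite e perm_trans_low => -[].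
Qed.

Lemma perm_trans_in_gen (G : {set trans k.+3}) p :
  generates_W5bf G -> perm_trans p \in G.
Proof.
case=> GW gen; have [g [s [gG [sG e]]]] := gen _ (perm_trans_W5bf p).
case/lastP: s sG e => [|s x]; first by move=> _ ->.
rewrite all_rcons tprod_rcons => /andP [xG sG] e; exfalso.
have [[xBbf _] P_neq0] : in_W5bf x /\ forall q, val (tprod g s q) <> 0.
  split; first exact: GW.
  apply: tprod_neq0 => h; rewrite inE => /predU1P [->|hs]; first by case: (GW g gG) => [[]].
  by case: (GW h (allP sG h hs)) => [[]].
apply: (not_Bbf_right_factor xBbf P_neq0); rewrite -e.
- by move=> i; rewrite perm_trans_low ltnS ltn_ord.
- exact: perm_trans_low_inj.
Qed.

End PermutationEmbedding.

Theorem mainTheorem10 (n : nat) (G : {set trans n}) :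
  3 <= n -> generates_W5bf G -> (n - 2)`! <= #|G|.
Proof.
case: n G => [|[|[|k]]] G //= _ genG.
rewrite subSS subSS subn0 -card_Sn -(card_imset _ (@perm_trans_inj k)).
apply/subset_leq_card/subsetP => _ /imsetP [p _ ->].
exact: perm_trans_in_gen.
Qed.
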